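(* Let $F$ be an infinite field, let $V$ and $W$ be vector spaces over $F$, and let $n$ and $m_1,\dots,m_n$ be positive integers. Suppose that $m_i$-linear maps $f_i:V^{m_i}\to W$ ($i=1,\dots,n$) are such that for each $x\in V$ at least one of the elements $f_1(x,\dots,x),\dots,f_n(x,\dots,x)$ is $0$. Then there exists $i\in\{1,\dots,n\}$ such that $f_i(x,\dots,x)=0$ for every $x\in V$. *)

From mathcomp Require Import all_boot all_algebra.
Set Implicit Arguments. Unset Strict Implicit. Unset Printing Implicit Defensive.
Import GRing.Theory.
Local Open Scope ring_scope.

Definition infinite_carrier (T : eqType) : Prop :=
  forall s : seq T, exists x : T, x \notin s.

Definition upd (V : Type) (m : nat) (x : 'I_m -> V) (j : 'I_m) (v : V) : 'I_m -> V :=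
  fun k => if k == j then v else x k.

Definition multilinear (F : pzRingType) (V W : lmodType F) (m : nat)
    (f : ('I_m -> V) -> W) : Prop :=
  forall (j : 'I_m) (x : 'I_m -> V) (a : F) (u v : V),
    f (upd x j (a *: u + v)) = a *: f (upd x j u) + f (upd x j v).

Definition diag (m : nat) {V : Type} (x : V) : 'I_m -> V := fun _ => x.
Arguments diag m {V} x.

(* Restricted to a line t |-> x + t y, each map x |-> f_i (x, ..., x) is a
   W-valued polynomial in t, so it vanishes at finitely many t unless it
   vanishes identically.  If every f_i is somewhere nonzero, induction on the
   number of maps produces a common nonzero point: given a point x where the
   first ones are nonzero and a point y where the next one is, the line through
   x and y meets the zeros of all of them in finitely many points, and an
   infinite field has a point outside. *)
From Stdlib Require Import Classical FunctionalExtensionality.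
From mathcomp Require Import all_boot all_algebra.
Set Implicit Arguments. Unset Strict Implicit. Unset Printing Implicit Defensive.
Import GRing.Theory.
Local Open Scope ring_scope.

Lemma infinite_uniq_seq (T : eqType) (k : nat) :
  infinite_carrier T -> exists u : seq T, uniq u /\ size u = k.
Proof.
move=> infT; elim: k => [|k [u [uniq_u size_u]]]; first by exists [::].
have [x xNu] := infT u.
by exists (x :: u); rewrite /= xNu uniq_u size_u.
Qed.

Lemma count_has_leq_sum (T I : Type) (a : I -> pred T) (s : seq I) (u : seq T) :
  (count (fun t => has (a^~ t) s) u <= \sum_(i <- s) count (a i) u)%N.
Proof.
elim: s => [|i s IHs]; first by rewrite big_nil; elim: u.
rewrite big_cons (leq_trans _ (leq_add (leqnn _) IHs)) //.
by rewrite -(count_predUI (a i)) (leq_trans _ (leq_addr _ _)).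
Qed.

Section PolynomialMaps.
Variables (F : fieldType) (W : lmodType F).

(* [poly_map d p]: p is a W-valued polynomial function of degree < d, given in
   Horner form p t = c + t q t. *)
Fixpoint poly_map (d : nat) (p : F -> W) : Prop :=
  match d with
  | 0%N => forall t, p t = 0
  | d.+1 => exists c (q : F -> W), poly_map d q /\ forall t, p t = c + t *: q t
  end.

Lemma eq_poly_map d p q : p =1 q -> poly_map d p -> poly_map d q.
Proof.
case: d => [|d] /= pq; first by move=> p0 t; rewrite -pq p0.
by move=> [c [r [r_poly pE]]]; exists c, r; split=> // t; rewrite -pq pE.
Qed.

Lemma poly_map_widen d p : poly_map d p -> poly_map d.+1 p.
Proof.
elim: d p => [|d IHd] p /=.
  by move=> p0; exists 0, (fun _ => 0); split=> // t; rewrite p0 scaler0 addr0.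
by move=> [c [q [q_poly pE]]]; exists c, q; split=> //; apply: IHd.
Qed.

Lemma poly_mapD d p q :
  poly_map d p -> poly_map d q -> poly_map d (fun t => p t + q t).
Proof.
elim: d p q => [|d IHd] p q /=; first by move=> p0 q0 t; rewrite p0 q0 addr0.
move=> [c [r [r_poly pE]]] [c' [r' [r'_poly qE]]].
exists (c + c'), (fun t => r t + r' t); split; first exact: IHd.
by move=> t; rewrite pE qE scalerDr addrACA.
Qed.

Lemma poly_map_mulX d p : poly_map d p -> poly_map d.+1 (fun t => t *: p t).
Proof. by move=> p_poly; exists 0, p; split=> // t; rewrite add0r. Qed.

Lemma poly_map_cst c : poly_map 1 (fun _ => c).
Proof. by exists c, (fun _ => 0); split=> // t; rewrite scaler0 addr0. Qed.

Lemma poly_map_factor d p a : poly_map d.+1 p ->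
  exists q, poly_map d q /\ forall t, p t = p a + (t - a) *: q t.
Proof.
elim: d p => [|d IHd] p /= [c [q [q_poly pE]]].
  by exists (fun _ => 0); split=> // t; rewrite !pE !q_poly !scaler0 !addr0.
have [r [r_poly qE]] := IHd q q_poly.
exists (fun t => q a + t *: r t); split; first by exists (q a), r.
move=> t; rewrite !pE qE !scalerDr !scalerA !scalerBl !addrA (mulrC t).
by congr (_ + _); rewrite addrAC addrK.
Qed.

Lemma poly_map_eq0 d p (s : seq F) : poly_map d p -> uniq s -> (d <= size s)%N ->
  {in s, forall t, p t = 0} -> forall t, p t = 0.
Proof.
elim: d p s => [|d IHd] p s p_poly //.
case: s => [|a s] //= /andP[aNs uniq_s] d_le p0.
have [q [q_poly pE]] := poly_map_factor a p_poly.
have pa0 : p a = 0 by apply: p0; rewrite mem_head.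
suff q0 : forall t, q t = 0 by move=> t; rewrite pE pa0 q0 scaler0 addr0.
apply: (IHd q s) => // b b_s; apply/eqP.
have /eqP := p0 b (mem_behead (s := a :: s) b_s).
rewrite pE pa0 add0r scaler_eq0 subr_eq0.
by case/orP=> // /eqP ba; move: aNs; rewrite -ba b_s.
Qed.

Lemma poly_map_count_roots d p (s : seq F) t0 : poly_map d p -> p t0 != 0 ->
  uniq s -> (count (fun t => p t == 0%R) s < d)%N.
Proof.
move=> p_poly pt0 uniq_s; rewrite ltnNge; apply: contra pt0 => d_le.
apply/eqP; apply: (poly_map_eq0 p_poly (filter_uniq (fun t => p t == 0) uniq_s)).
  by rewrite size_filter.
by move=> t; rewrite mem_filter => /andP[/eqP].
Qed.

Lemma exists_common_nonroot (I : eqType) (d : I -> nat) (p : I -> F -> W)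
    (s : seq I) :
  infinite_carrier F -> (forall i, poly_map (d i) (p i)) ->
  {in s, forall i, exists t, p i t != 0} -> exists t, {in s, forall i, p i t != 0}.
Proof.
move=> infF p_poly p_nz.
have [u [uniq_u size_u]] := infinite_uniq_seq (\sum_(i <- s) d i).+1 infF.
pose root_of_some t := has (fun i => p i t == 0) s.
have few_roots : (count root_of_some u < size u)%N.
  rewrite size_u ltnS (leq_trans (count_has_leq_sum _ _ _)) //.
  rewrite big_seq [X in (_ <= X)%N]big_seq; apply: leq_sum => i i_s.
  have [t0 pt0] := p_nz i i_s.
  exact: ltnW (poly_map_count_roots (p_poly i) pt0 uniq_u).
have [t _ /hasPn t_nonroot] : exists2 t, t \in u & ~~ root_of_some t.
  apply/hasP; rewrite has_count; move: few_roots.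
  by rewrite -(count_predC root_of_some) -{1}(addn0 (count _ _)) ltn_add2l.
by exists t.
Qed.

End PolynomialMaps.

Section MultilinearOnLines.
Variables (F : fieldType) (V W : lmodType F) (m : nat) (f : ('I_m -> V) -> W).
Hypothesis f_multilinear : multilinear f.

Lemma multilinear_poly_map (x y : 'I_m -> V) :
  poly_map m.+1 (fun t => f (fun k => x k + t *: y k)).
Proof.
suff poly_supp j : forall x y : 'I_m -> V, (forall k : 'I_m, (j <= k)%N -> y k = 0) ->
    poly_map j.+1 (fun t => f (fun k => x k + t *: y k)).
  by apply: poly_supp => k; rewrite leqNgt ltn_ord.
elim: j => [|j IHj] {}x {}y y_supp.
  apply: eq_poly_map (poly_map_cst (f x)) => t; congr f.
  by apply: functional_extensionality => k; rewrite y_supp // scaler0 addr0.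
have [j_lt|m_le] := ltnP j m; last first.
  apply/poly_map_widen/IHj => k j_le; apply: y_supp.
  by move: (ltn_ord k); rewrite ltnNge (leq_trans m_le j_le).
pose J := Ordinal j_lt; pose y' := upd y J 0.
have y'_supp (k : 'I_m) : (j <= k)%N -> y' k = 0.
  rewrite /y' /upd; case: eqVneq => // kJ j_le; apply: y_supp.
  by rewrite ltn_neqAle j_le andbT; apply: contra kJ => /eqP jk; apply/eqP/val_inj.
have split_J t : (fun k => x k + t *: y k) =
    upd (fun k => x k + t *: y' k) J (t *: y J + x J).
  apply: functional_extensionality => k; rewrite /y' /upd.
  by case: eqVneq => [->|_] //; rewrite addrC.
have upd_J t v : upd (fun k => x k + t *: y' k) J v =
    (fun k => upd x J v k + t *: y' k).
  apply: functional_extensionality => k; rewrite /y' /upd.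
  by case: eqVneq; rewrite ?scaler0 ?addr0.
apply: eq_poly_map (poly_mapD (poly_map_mulX (IHj (upd x J (y J)) y' y'_supp))
                               (poly_map_widen (IHj (upd x J (x J)) y' y'_supp))).
by move=> t; rewrite split_J f_multilinear !upd_J.
Qed.

End MultilinearOnLines.

Section CommonNonzeroPoint.
Variables (F : fieldType) (V W : lmodType F).

Definition poly_on_lines (d : nat) (g : V -> W) : Prop :=
  forall x y : V, poly_map d (fun t => g (x + t *: y)).

Lemma multilinear_diag_poly_on_lines m (f : ('I_m -> V) -> W) :
  multilinear f -> poly_on_lines m.+1 (fun x => f (diag m x)).
Proof. by move=> f_multilinear x y; apply: multilinear_poly_map. Qed.

Lemma exists_common_nonzero (I : eqType) (d : I -> nat) (g : I -> V -> W)
    (s : seq I) :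
  infinite_carrier F -> (forall i, poly_on_lines (d i) (g i)) ->
  {in s, forall i, exists x, g i x != 0} -> exists z, {in s, forall i, g i z != 0}.
Proof.
move=> infF g_poly; elim: s => [|i s IHs] g_nz; first by exists 0.
have [x x_nz] : exists x, {in s, forall j, g j x != 0}.
  by apply: IHs => j j_s; apply: g_nz; rewrite in_cons j_s orbT.
have [y y_nz] := g_nz i (mem_head i s).
have [|t t_nz] := exists_common_nonroot (s := i :: s) infF
  (fun j => g_poly j x (y - x)).
  move=> j; rewrite in_cons => /predU1P[->|j_s].
    by exists 1; rewrite scale1r addrC subrK.
  by exists 0; rewrite scale0r addr0 x_nz.
by exists (x + t *: (y - x)).
Qed.

End CommonNonzeroPoint.

Theorem lemma3p10 (F : fieldType) (V W : lmodType F)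
  (n : nat) (m : 'I_n -> nat) (f : forall i : 'I_n, ('I_(m i) -> V) -> W)
  (HF : infinite_carrier F) (Hn : (0 < n)%N) (Hm : forall i, (0 < m i)%N)
  (Hlin : forall i, multilinear (f i))
  (Hzero : forall x : V, exists i : 'I_n, f i (diag (m i) x) = 0) :
  exists i : 'I_n, forall x : V, f i (diag (m i) x) = 0.
Proof.
apply: NNPP => no_vanishing_f.
have f_nz i : exists x, f i (diag (m i) x) != 0.
  have [x /eqP] := not_all_ex_not _ _ (fun f_i0 => no_vanishing_f (ex_intro _ i f_i0)).
  by exists x.
have [|z z_nz] := exists_common_nonzero (s := enum 'I_n) HF
  (fun i => multilinear_diag_poly_on_lines (Hlin i)).
  by move=> i _; apply: f_nz.
have [i f_i_z] := Hzero z.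
by move: (z_nz i (mem_enum _ i)); rewrite f_i_z eqxx.
Qed.
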